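(* Under the standing assumptions below, $\sum_{i=1}^\infty\frac{a_i\pi_i}{a_i+a_j}=1$ for every $j\in\mathbb{N}$.
   Context: Standing assumptions: $X$ is one of $\ell^p$ ($1\le p\le\infty$), $c$, $c_0$; $(a_n)$ strictly decreasing positive reals, $a_n\to0$; $b=(b_n)\in X$ with $b_n>0$; $\pi_n:=2\prod_{m\ge1,\,m\ne n}\frac{1+a_m/a_n}{1-a_m/a_n}$ with $\pi\in\ell^\infty$; $\phi_{ij}:=\frac{b_i/b_j}{1+a_i/a_j}$ satisfies $\phi_{ij}\le C\mu^{|i-j|}$ for some $C>0$, $\mu\in(0,1)$. *)

From Stdlib Require Import Reals Lra.
From Coquelicot Require Import Coquelicot.
Open Scope R_scope.

(* Indices are shifted: the paper's index n >= 1 corresponds to n-1 here. *)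

Inductive seq_space : Type :=
  | Lp (p : R)
  | Linf
  | Cconv
  | C0.

Definition valid_space (X : seq_space) : Prop :=
  match X with Lp p => 1 <= p | _ => True end.

Definition abs_pow (x p : R) : R := if Req_EM_T x 0 then 0 else Rpower (Rabs x) p.

Definition in_space (X : seq_space) (b : nat -> R) : Prop :=
  match X with
  | Lp p => ex_series (fun n => abs_pow (b n) p)
  | Linf => exists M, forall n, Rabs (b n) <= M
  | Cconv => ex_finite_lim_seq b
  | C0 => is_lim_seq b 0
  end.

Definition natdist (i j : nat) : nat := (i - j + (j - i))%nat.

Fixpoint pprod (a : nat -> R) (n N : nat) : R :=
  match N with
  | O => 1
  | S N' => pprod a n N' *
            (if Nat.eqb N' n then 1 else (1 + a N' / a n) / (1 - a N' / a n))
  end.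

Definition is_pi (a : nat -> R) (n : nat) (v : R) : Prop :=
  is_lim_seq (fun N => 2 * pprod a n N) v.

From Stdlib Require Import Reals Lra Lia Psatz.
From Coquelicot Require Import Coquelicot.
Open Scope R_scope.

(* The finite partial-fraction identity
     sum_{i<N} a_i * 2 prod_{m<N, m<>i} (a_i + a_m)/(a_i - a_m) / (a_i + w)
       = 1 - prod_{m<N} (w - a_m)/(w + a_m)
   gives exactly 1 at w = a_j as soon as N > j.  Every factor of the partial
   products has modulus at least 1, so these products are dominated by |pi_i|,
   which is bounded; the same bound applied to pi_0 forces (a_i) to be
   summable.  Tannery's theorem then lets N go to infinity. *)

Fixpoint psum (f : nat -> R) (N : nat) : R :=
  match N with O => 0 | S n => psum f n + f n end.

Lemma sum_n_psum (f : nat -> R) (n : nat) : sum_n f n = psum f (S n).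
Proof.
  induction n as [|n IH]; [rewrite sum_O; simpl; ring|].
  now rewrite sum_Sn, IH.
Qed.

Lemma is_series_psum (f : nat -> R) (l : R) :
  is_series f l <-> is_lim_seq (psum f) l.
Proof.
  rewrite is_lim_seq_incr_1.
  split; intros H.
  - assert (Hs : is_lim_seq (sum_n f) l) by exact H.
    exact (is_lim_seq_ext _ _ l (sum_n_psum f) Hs).
  - assert (Hs : is_lim_seq (sum_n f) l).
    { apply (is_lim_seq_ext (fun n => psum f (S n))); [|exact H].
      intros n; symmetry; apply sum_n_psum. }
    exact Hs.
Qed.

Lemma psum_ext (f g : nat -> R) (N : nat) :
  (forall i, (i < N)%nat -> f i = g i) -> psum f N = psum g N.
Proof.
  induction N as [|N IH]; intros H; simpl; [reflexivity|].
  rewrite IH by (intros i Hi; apply H; lia).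
  now rewrite H by lia.
Qed.

Lemma psum_lin (A B : R) (u v : nat -> R) (N : nat) :
  psum (fun i => A * u i + B * v i) N = A * psum u N + B * psum v N.
Proof. induction N as [|N IH]; simpl; [ring|rewrite IH; ring]. Qed.

Lemma psum_minus (u v : nat -> R) (N : nat) :
  psum (fun i => u i - v i) N = psum u N - psum v N.
Proof. induction N as [|N IH]; simpl; [ring|rewrite IH; ring]. Qed.

Lemma Rabs_psum_tail_le (f h : nat -> R) (K N : nat) :
  (K <= N)%nat -> (forall i, Rabs (f i) <= h i) ->
  Rabs (psum f N - psum f K) <= psum h N - psum h K.
Proof.
  intros HK Hf; induction HK as [|N HK IH].
  - rewrite Rminus_diag, Rabs_R0; lra.
  - simpl. replace (psum f N + f N - psum f K) with (psum f N - psum f K + f N) by ring.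
    eapply Rle_trans; [apply Rabs_triang|]. specialize (Hf N); lra.
Qed.

Lemma is_lim_seq_psum (g : nat -> nat -> R) (l : nat -> R) (K : nat) :
  (forall i, is_lim_seq (fun N => g N i) (l i)) ->
  is_lim_seq (fun N => psum (g N) K) (psum l K).
Proof.
  intros H; induction K as [|K IH]; simpl; [apply is_lim_seq_const|].
  now apply is_lim_seq_plus'.
Qed.

Lemma tannery (f : nat -> nat -> R) (t h : nat -> R) (l : R) :
  (forall i, is_lim_seq (fun N => f N i) (t i)) ->
  (forall N i, Rabs (f N i - t i) <= h i) -> ex_series h ->
  is_lim_seq (fun N => psum (f N) N) l -> is_series t l.
Proof.
  intros Hlim Hdom [s Hs] Hfl.
  set (d := fun N i => f N i - t i).
  assert (Hd0 : is_lim_seq (fun N => psum (d N) N) 0).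
  { apply is_lim_seq_spec; intros eps.
    assert (Heps : 0 < eps / 2) by (destruct eps; simpl; lra).
    assert (Hcauchy : ex_lim_seq_cauchy (psum h))
      by (apply ex_lim_seq_cauchy_corr; exists s; now apply is_series_psum).
    destruct (Hcauchy (mkposreal _ Heps)) as [K HK]; simpl in HK.
    assert (Hhead : is_lim_seq (fun N => psum (d N) K) 0).
    { replace (Finite 0) with (Finite (psum (fun _ => 0) K))
        by (f_equal; clear; induction K; simpl; lra).
      apply is_lim_seq_psum; intros i.
      replace (Finite 0) with (Rbar_minus (t i) (t i)) by (simpl; f_equal; ring).
      apply is_lim_seq_minus'; [apply Hlim|apply is_lim_seq_const]. }
    destruct (proj2 (is_lim_seq_spec _ _) Hhead (mkposreal _ Heps)) as [N1 HN1].
    simpl in HN1.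
    exists (Nat.max K N1); intros N HN.
    specialize (HN1 N ltac:(lia)); rewrite Rminus_0_r in HN1.
    pose proof (Rabs_psum_tail_le (d N) h K N ltac:(lia) (Hdom N)) as Htail.
    specialize (HK N K ltac:(lia) ltac:(lia)).
    pose proof (Rle_abs (psum h N - psum h K)).
    replace (psum (d N) N - 0) with (psum (d N) K + (psum (d N) N - psum (d N) K)) by ring.
    eapply Rle_lt_trans; [apply Rabs_triang|]. lra. }
  apply is_series_psum.
  apply (is_lim_seq_ext (fun N => psum (f N) N - psum (d N) N)).
  { intros N; unfold d; rewrite psum_minus; ring. }
  replace (Finite l) with (Rbar_minus l 0) by (simpl; f_equal; ring).
  now apply is_lim_seq_minus'.
Qed.

Definition pprod_factor (a : nat -> R) (n m : nat) : R :=
  if Nat.eqb m n then 1 else (1 + a m / a n) / (1 - a m / a n).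

Lemma pprod_S (a : nat -> R) (n N : nat) :
  pprod a n (S N) = pprod a n N * pprod_factor a n N.
Proof. reflexivity. Qed.

Fixpoint blaschke (a : nat -> R) (w : R) (N : nat) : R :=
  match N with O => 1 | S n => blaschke a w n * ((w - a n) / (w + a n)) end.

Lemma blaschke_root (a : nat -> R) (j N : nat) :
  (j < N)%nat -> blaschke a (a j) N = 0.
Proof.
  induction N as [|N IH]; intros H; simpl; [lia|].
  destruct (Nat.eq_dec j N) as [->|Hne].
  - rewrite Rminus_diag; unfold Rdiv; ring.
  - rewrite IH by lia; ring.
Qed.

Section PartialFractions.

Variable a : nat -> R.
Hypothesis Ha_nz : forall n, a n <> 0.
Hypothesis Ha_inj : forall m n, a m = a n -> m = n.

Lemma pprod_factor_neq (n m : nat) : m <> n ->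
  pprod_factor a n m = (a n + a m) / (a n - a m).
Proof.
  intros Hmn; unfold pprod_factor.
  rewrite (proj2 (Nat.eqb_neq m n) Hmn).
  assert (Hd : a n - a m <> 0) by (intros E; apply Hmn, Ha_inj; lra).
  specialize (Ha_nz n).
  replace (1 - a m / a n) with ((a n - a m) / a n) by (field; auto).
  field; auto.
Qed.

Lemma pprod_blaschke (n N : nat) :
  (N <= n)%nat -> pprod a n N = blaschke a (- a n) N.
Proof.
  induction N as [|N IH]; intros HN; simpl; [reflexivity|].
  rewrite IH by lia. fold (pprod_factor a n N).
  rewrite pprod_factor_neq by lia.
  assert (Hd : a n - a N <> 0) by (intros E; assert (N = n) by (apply Ha_inj; lra); lia).
  f_equal; field; lra.
Qed.

Lemma psum_pprod_blaschke (N : nat) (w : R) :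
  (forall m, (m < N)%nat -> w + a m <> 0) ->
  psum (fun i => a i * (2 * pprod a i N) / (a i + w)) N = 1 - blaschke a w N.
Proof.
  revert w; induction N as [|N IH]; intros w Hw; simpl; [ring|].
  assert (HwN : w + a N <> 0) by (apply Hw; lia).
  set (A := (w - a N) / (w + a N)).
  set (B := 2 * a N / (a N + w)).
  rewrite (psum_ext _ (fun i => A * (a i * (2 * pprod a i N) / (a i + w))
                              + B * (a i * (2 * pprod a i N) / (a i + - a N)))).
  2:{ intros i Hi. fold (pprod_factor a i N). rewrite pprod_factor_neq by lia.
      assert (w + a i <> 0) by (apply Hw; lia).
      assert (a i - a N <> 0) by (intros E; assert (i = N) by (apply Ha_inj; lra); lia).
      specialize (Ha_nz i). unfold A, B. field; repeat split; lra. }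
  rewrite psum_lin, IH by (intros m Hm; apply Hw; lia).
  rewrite IH by (intros m Hm Hz; assert (m = N) by (apply Ha_inj; lra); lia).
  rewrite Nat.eqb_refl, (pprod_blaschke N N) by lia.
  unfold A, B. field. lra.
Qed.

End PartialFractions.

Lemma Rabs_le_lim_of_Rabs_incr (u : nat -> R) (l : R) :
  (forall n, Rabs (u n) <= Rabs (u (S n))) -> is_lim_seq u l ->
  forall n, Rabs (u n) <= Rabs l.
Proof.
  intros Hincr Hl n.
  apply is_lim_seq_abs, (is_lim_seq_incr_n _ n) in Hl.
  assert (Hle : forall k, Rabs (u n) <= Rabs (u (k + n)%nat)).
  { induction k as [|k IH]; [simpl; lra|]. eapply Rle_trans; [apply IH|apply Hincr]. }
  exact (is_lim_seq_le (fun _ => Rabs (u n)) _ _ _ Hle (is_lim_seq_const _) Hl).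
Qed.

Lemma Rabs_cayley_ge1 (x : R) : 0 <= x -> x <> 1 -> 1 <= Rabs ((1 + x) / (1 - x)).
Proof.
  intros Hx Hx1.
  assert (Hd : 0 < Rabs (1 - x)) by (apply Rabs_pos_lt; lra).
  rewrite Rabs_div, (Rabs_pos_eq (1 + x)) by lra.
  apply (Rmult_le_reg_r (Rabs (1 - x))); [exact Hd|].
  unfold Rdiv; rewrite Rmult_assoc, Rinv_l, Rmult_1_l, Rmult_1_r by lra.
  apply Rabs_le; lra.
Qed.

Lemma cayley_ge (x : R) : 0 <= x < 1 -> 1 + 2 * x <= (1 + x) / (1 - x).
Proof.
  intros Hx.
  replace ((1 + x) / (1 - x)) with (1 + 2 * x + 2 * (x * x) / (1 - x)) by (field; lra).
  assert (0 <= 2 * (x * x) / (1 - x)) by (apply Rdiv_le_0_compat; nra).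
  lra.
Qed.

Section DecreasingNodes.

Variable a : nat -> R.
Hypothesis Ha_pos : forall n, 0 < a n.
Hypothesis Ha_dec : forall n, a (S n) < a n.

Lemma a_lt (m n : nat) : (m < n)%nat -> a n < a m.
Proof.
  induction n as [|n IH]; intros H; [lia|].
  destruct (Nat.eq_dec m n) as [->|Hne]; [apply Ha_dec|].
  specialize (Ha_dec n); specialize (IH ltac:(lia)); lra.
Qed.

Lemma a_inj (m n : nat) : a m = a n -> m = n.
Proof.
  intros E; destruct (Nat.lt_total m n) as [H|[H|H]]; auto;
    apply a_lt in H; lra.
Qed.

Lemma Rabs_pprod_factor_ge1 (n m : nat) : 1 <= Rabs (pprod_factor a n m).
Proof.
  unfold pprod_factor; destruct (Nat.eqb_spec m n) as [_|Hmn].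
  - rewrite Rabs_R1; lra.
  - apply Rabs_cayley_ge1.
    + apply Rdiv_le_0_compat; [apply Rlt_le|]; apply Ha_pos.
    + intros E; apply Hmn, a_inj.
      pose proof (Ha_pos n).
      replace (a m) with (a m / a n * a n) by (field; lra). rewrite E; ring.
Qed.

Lemma Rabs_pprod_le (n : nat) (p : R) :
  is_pi a n p -> forall N, Rabs (2 * pprod a n N) <= Rabs p.
Proof.
  intros Hp; apply (Rabs_le_lim_of_Rabs_incr (fun N => 2 * pprod a n N)); [intros N|exact Hp].
  rewrite pprod_S, !Rabs_mult.
  pose proof (Rabs_pprod_factor_ge1 n N).
  pose proof (Rabs_pos 2); pose proof (Rabs_pos (pprod a n N)).
  apply Rmult_le_compat_l; [lra|]. nra.
Qed.

(* The factors of [pprod a 0] are at least [1 + 2 a_m / a_0]. *)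
Lemma psum_le_pprod0 (N : nat) : 2 * psum a (S N) <= a 0%nat * (1 + pprod a 0 (S N)).
Proof.
  induction N as [|N IH]; [simpl; lra|].
  assert (Hge : a 0%nat <= psum a (S N)).
  { clear IH; induction N as [|N IHN]; simpl in *; [lra|].
    specialize (Ha_pos (S N)); lra. }
  pose proof (Ha_pos 0%nat) as H0.
  assert (Hx : 0 <= a (S N) / a 0%nat < 1).
  { split; [apply Rdiv_le_0_compat; [apply Rlt_le, Ha_pos | lra]|].
    apply (Rdiv_lt_1 _ _ H0), a_lt; lia. }
  pose proof (cayley_ge _ Hx) as Hf.
  rewrite pprod_S; unfold pprod_factor; simpl Nat.eqb; cbv iota.
  change (psum a (S (S N))) with (psum a (S N) + a (S N)).
  assert (Hax : a (S N) = a 0%nat * (a (S N) / a 0%nat)) by (field; lra).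
  set (x := a (S N) / a 0%nat) in *.
  set (P := pprod a 0 (S N)) in *.
  set (f := (1 + x) / (1 - x)) in *.
  set (S0 := psum a (S N)) in *.
  rewrite Hax.
  assert (HP : 1 <= P) by nra.
  assert (0 <= a 0%nat * P * (f - 1 - 2 * x)) by (apply Rmult_le_pos; nra).
  assert (0 <= a 0%nat * x * (P - 1)) by (apply Rmult_le_pos; nra).
  nra.
Qed.

Lemma ex_series_of_pprod0_bounded (B : R) :
  (forall N, Rabs (pprod a 0 N) <= B) -> ex_series a.
Proof.
  intros HB.
  assert (Hincr : forall N, psum a N <= psum a (S N))
    by (intros N; simpl; specialize (Ha_pos N); lra).
  destruct (ex_finite_lim_seq_incr (psum a) (a 0%nat * (1 + B) / 2)) as [l Hl].
  - exact Hincr.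
  - intros N; eapply Rle_trans; [apply Hincr|].
    pose proof (psum_le_pprod0 N); pose proof (Ha_pos 0%nat).
    pose proof (Rle_abs (pprod a 0 (S N))); specialize (HB (S N)).
    apply (Rmult_le_reg_l 2); [lra|]. nra.
  - exists l; now apply is_series_psum.
Qed.

End DecreasingNodes.

Lemma Rabs_weighted_sub_le (x y u v M : R) :
  0 < x -> 0 < y -> Rabs u <= M -> Rabs v <= M ->
  Rabs (x * u / (x + y) - x * v / (x + y)) <= 2 * M / y * x.
Proof.
  intros Hx Hy Hu Hv.
  replace (x * u / (x + y) - x * v / (x + y)) with (x / (x + y) * (u - v)) by (field; lra).
  replace (2 * M / y * x) with (x / y * (M + M)) by (field; lra).
  rewrite Rabs_mult, (Rabs_pos_eq (x / (x + y))) by (apply Rdiv_le_0_compat; lra).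
  apply Rmult_le_compat; [apply Rdiv_le_0_compat; lra | apply Rabs_pos | |].
  - apply Rmult_le_compat_l; [lra|]. apply Rinv_le_contravar; lra.
  - eapply Rle_trans; [apply Rabs_triang|]. rewrite Rabs_Ropp; lra.
Qed.

Theorem mainTheorem13
  (X : seq_space) (HX : valid_space X)
  (a : nat -> R)
  (Ha_pos : forall n, 0 < a n)
  (Ha_dec : forall n, a (S n) < a n)
  (Ha_lim : is_lim_seq a 0)
  (b : nat -> R) (Hb_X : in_space X b) (Hb_pos : forall n, 0 < b n)
  (pi : nat -> R) (Hpi : forall n, is_pi a n (pi n))
  (Hpi_bdd : exists M, forall n, Rabs (pi n) <= M)
  (Hphi : exists C mu, 0 < C /\ 0 < mu < 1 /\
     forall i j, (b i / b j) / (1 + a i / a j) <= C * mu ^ (natdist i j)) :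
  forall j : nat, is_series (fun i => a i * pi i / (a i + a j)) 1.
Proof.
  intros j; destruct Hpi_bdd as [M HM].
  assert (Hpprod : forall i N, Rabs (2 * pprod a i N) <= M)
    by (intros i N; eapply Rle_trans; [apply (Rabs_pprod_le a Ha_pos Ha_dec i)|]; auto).
  assert (Hsum : ex_series a).
  { apply (ex_series_of_pprod0_bounded a Ha_pos Ha_dec (M / 2)); intros N.
    specialize (Hpprod 0%nat N); rewrite Rabs_mult, (Rabs_pos_eq 2) in Hpprod by lra; lra. }
  pose proof (Ha_pos j) as Haj.
  apply (tannery (fun N i => a i * (2 * pprod a i N) / (a i + a j)) _
                 (fun i => 2 * M / a j * a i)).
  - intros i; pose proof (Ha_pos i).
    apply (is_lim_seq_ext (fun N => a i / (a i + a j) * (2 * pprod a i N)));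
      [intros N; field; lra|].
    replace (Finite (a i * pi i / (a i + a j))) with (Rbar_mult (a i / (a i + a j)) (pi i))
      by (simpl; f_equal; field; lra).
    apply is_lim_seq_scal_l, Hpi.
  - intros N i; apply Rabs_weighted_sub_le; auto.
  - exact (ex_series_scal_l (2 * M / a j) a Hsum).
  - apply (is_lim_seq_ext_loc (fun _ => 1)); [|apply is_lim_seq_const].
    exists (S j); intros N HN.
    rewrite psum_pprod_blaschke, blaschke_root; try lia; try ring.
    + intros n; specialize (Ha_pos n); lra.
    + exact (a_inj a Ha_dec).
    + intros m _; specialize (Ha_pos m); lra.
Qed.
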